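(* Let $D$ be the minimal Dress ring of $\mathbb{R}(X)$ and let $J$ be the ideal of $D$ generated by a family $(r_i)_{i\in\Lambda}$ of elements of $D$. Then $J^2$ is the ideal generated by $(r_i^2)_{i\in\Lambda}$.
   Context: $D$ denotes the minimal Dress ring of the field $\mathbb{R}(X)$, i.e. the subring of $\mathbb{R}(X)$ generated by $\mathbb{Z}$ and all elements $1/(1+h^2)$ with $h\in\mathbb{R}(X)$. *)

From HB Require Import structures.
From Stdlib Require Import Reals ClassicalEpsilon FunctionalExtensionality.
From mathcomp Require Import all_boot all_order all_algebra.
Set Implicit Arguments. Unset Strict Implicit. Unset Printing Implicit Defensive.
Import GRing.Theory.

Definition R_eqb (x y : R) : bool := if Req_EM_T x y then true else false.
Lemma R_eqP : Equality.axiom R_eqb.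
Proof. by move=> x y; rewrite /R_eqb; case: Req_EM_T => h; constructor. Qed.
HB.instance Definition _ := hasDecEq.Build R R_eqP.

Definition R_find (P : pred R) (n : nat) : option R :=
  match excluded_middle_informative (exists x, P x) with
  | left h => Some (proj1_sig (constructive_indefinite_description _ h))
  | right _ => None
  end.
Lemma R_find_correct P n x : R_find P n = Some x -> P x.
Proof.
rewrite /R_find; case: excluded_middle_informative => // h [<-].
exact: proj2_sig (constructive_indefinite_description _ h).
Qed.
Lemma R_find_complete (P : pred R) : (exists x, P x) -> exists n, R_find P n.
Proof. by move=> h; exists 0%N; rewrite /R_find; case: excluded_middle_informative. Qed.
Lemma R_find_ext (P Q : pred R) : P =1 Q -> R_find P =1 R_find Q.
Proof. by move=> h; have -> : P = Q by apply: functional_extensionality. Qed.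
HB.instance Definition _ := hasChoice.Build R R_find_correct R_find_complete R_find_ext.

Lemma R_addA : @associative R Rplus. Proof. by move=> x y z; rewrite Rplus_assoc. Qed.
Lemma R_addC : @commutative R R Rplus. Proof. exact: Rplus_comm. Qed.
Lemma R_add0 : @left_id R R R0 Rplus. Proof. exact: Rplus_0_l. Qed.
Lemma R_addN : @left_inverse R R R R0 Ropp Rplus. Proof. exact: Rplus_opp_l. Qed.
HB.instance Definition _ := GRing.isZmodule.Build R R_addA R_addC R_add0 R_addN.

Lemma R_mulA : @associative R Rmult. Proof. by move=> x y z; rewrite Rmult_assoc. Qed.
Lemma R_mulC : @commutative R R Rmult. Proof. exact: Rmult_comm. Qed.
Lemma R_mul1 : @left_id R R R1 Rmult. Proof. exact: Rmult_1_l. Qed.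
Lemma R_mulDl : @left_distributive R R Rmult Rplus. Proof. by move=> x y z; rewrite Rmult_plus_distr_r. Qed.
Lemma R_one_neq0 : R1 != R0.
Proof. by apply/eqP; exact: R1_neq_R0. Qed.
HB.instance Definition _ :=
  GRing.Zmodule_isComNzRing.Build R R_mulA R_mulC R_mul1 R_mulDl R_one_neq0.

Local Open Scope ring_scope.
Definition R_inv (x : R) : R := Rinv x.
Lemma R_mulVf (x : R) : x != 0 -> R_inv x * x = 1.
Proof. by move/eqP=> h; exact: Rinv_l. Qed.
Lemma R_inv0 : R_inv 0 = 0. Proof. exact: Rinv_0. Qed.
HB.instance Definition _ := GRing.ComNzRing_isField.Build R R_mulVf R_inv0.

Definition RX : fieldType := {fraction {poly R}}.

Inductive in_D : RX -> Prop :=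
  | D_int (z : int) : in_D (z%:~R)
  | D_gen (h : RX) : in_D ((1 + h ^+ 2)^-1)
  | D_add (a b : RX) : in_D a -> in_D b -> in_D (a + b)
  | D_opp (a : RX) : in_D a -> in_D (- a)
  | D_mul (a b : RX) : in_D a -> in_D b -> in_D (a * b).

Definition D_ideal_gen (S : RX -> Prop) (z : RX) : Prop :=
  exists l : seq (RX * RX),
    (forall p, p \in l -> in_D p.1 /\ S p.2) /\
    z = \sum_(p <- l) p.1 * p.2.

Definition D_ideal_mul (I J : RX -> Prop) : RX -> Prop :=
  D_ideal_gen (fun x => exists a b, I a /\ J b /\ x = a * b).

(** Every product [a * b] of elements of R(X) is a D-multiple of [a^2 + b^2]:
    for [a != 0] and [h = b / a] one has [a b = h / (1 + h^2) * (a^2 + b^2)],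
    and [h / (1 + h^2)] lies in [D] because it equals [1 / (1 + g^2) - 1 / 2]
    for the Cayley transform [g = (1 - h) / (1 + h)].  Hence the generators
    [r_i r_j] of [J^2] lie in the ideal generated by the squares [r_i^2];
    the reverse inclusion is trivial. *)

From HB Require Import structures.
From Stdlib Require Import Reals Psatz.
From mathcomp Require Import all_boot all_order all_algebra.
From mathcomp Require Import ring.
Import GRing.Theory.
Local Open Scope ring_scope.
Local Notation "x %:F" := (@FracField.tofrac _ x).

Lemma fraction_numden {A : idomainType} (x : {fraction A}) :
  exists n d : A, d != 0 /\ x = n%:F / d%:F.
Proof.
elim/quotW: x => x; exists (\n_x), (\d_x); split; first exact: denom_ratioP.
rewrite !piE; apply/eqmodP.
rewrite /= FracField.equivfE /FracField.mulf /FracField.invf.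
by rewrite !numden_Ratio ?mul1r ?denom_ratioP ?oner_eq0 // mulr1 mulrC.
Qed.

Lemma inv_one_add_sqr_cayley (F : fieldType) (h : F) :
  2 != 0 :> F -> 1 + h != 0 -> 1 + h ^+ 2 != 0 ->
  (1 + ((1 - h) / (1 + h)) ^+ 2)^-1 = 2^-1 + h / (1 + h ^+ 2).
Proof.
move=> t0 u0 v0.
have e : (1 + h) ^+ 2 + (1 - h) ^+ 2 = 2 * (1 + h ^+ 2) by ring.
by field; rewrite e t0 u0 v0 mulf_neq0.
Qed.

Lemma mul_eq_sqr_add_scale (F : fieldType) (a b : F) :
  a != 0 -> 1 + (b / a) ^+ 2 != 0 ->
  a * b = (b / a) / (1 + (b / a) ^+ 2) * (a ^+ 2 + b ^+ 2).
Proof.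
move=> a0 v0; have e : a ^+ 2 + b ^+ 2 = a ^+ 2 * (1 + (b / a) ^+ 2) by field.
by field; rewrite e a0 mulf_neq0 ?expf_neq0.
Qed.

Lemma R_sqr_add_eq0 (x y : R) : x ^+ 2 + y ^+ 2 = 0 -> x = 0.
Proof.
by move=> e; change (Rplus (Rmult x x) (Rmult y y) = R0) in e; change (x = R0); nra.
Qed.

Lemma poly_sqr_add_eq0 (p q : {poly R}) : p ^+ 2 + q ^+ 2 = 0 -> p = 0.
Proof.
move=> e; apply: (@roots_geq_poly_eq0 _ p (map INR (iota 0 (size p)))).
- apply/allP => x _; apply/eqP/(@R_sqr_add_eq0 _ q.[x]).
  by rewrite -!horner_exp -hornerD e horner0.
- by rewrite map_inj_uniq ?iota_uniq //; exact: INR_eq.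
- by rewrite size_map size_iota.
Qed.

Lemma one_add_sqr_neq0 (h : RX) : 1 + h ^+ 2 != 0.
Proof.
have [n [d [d0 ->]]] := fraction_numden h.
have dF0 : d%:F != 0 by rewrite tofrac_eq0.
apply: contra d0 => /eqP v0; apply/eqP/(@poly_sqr_add_eq0 d n)/eqP.
rewrite -tofrac_eq0 rmorphD !rmorphXn /=.
have -> : d%:F ^+ 2 + n%:F ^+ 2 = d%:F ^+ 2 * (1 + (n%:F / d%:F) ^+ 2).
  by rewrite mulrDr mulr1 exprMn exprVn mulrCA mulfV ?expf_neq0 ?mulr1.
by rewrite v0 mulr0.
Qed.

Lemma in_D1 : in_D 1.
Proof. by have := D_int 1. Qed.

Lemma in_D0 : in_D 0.
Proof. by have := D_int 0. Qed.

Lemma in_D_half : in_D 2^-1.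
Proof. by have := D_gen 1; rewrite expr1n. Qed.

Lemma in_D_div_one_add_sqr (h : RX) : in_D (h / (1 + h ^+ 2)).
Proof.
have [u0|u0] := eqVneq (1 + h) 0.
  have -> : h = -1 by apply/eqP; rewrite -addr_eq0 addrC u0.
  by rewrite sqrrN expr1n mulN1r; apply/D_opp/in_D_half.
have t0 : 2 != 0 :> RX by have := one_add_sqr_neq0 1; rewrite expr1n.
have -> : h / (1 + h ^+ 2) = (1 + ((1 - h) / (1 + h)) ^+ 2)^-1 - 2^-1.
  by rewrite inv_one_add_sqr_cayley ?one_add_sqr_neq0 // addrAC subrr add0r.
exact/D_add/D_opp/in_D_half/D_gen.
Qed.

Lemma mul_D_multiple_sqr_add (a b : RX) :
  exists2 c, in_D c & a * b = c * (a ^+ 2 + b ^+ 2).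
Proof.
have [->|a0] := eqVneq a 0; first by exists 0; rewrite ?mul0r; first exact: in_D0.
exists (b / a / (1 + (b / a) ^+ 2)); first exact: in_D_div_one_add_sqr.
exact/mul_eq_sqr_add_scale/one_add_sqr_neq0.
Qed.

Section IdealGen.
Variable S : RX -> Prop.

Lemma D_ideal_gen0 : D_ideal_gen S 0.
Proof. by exists [::]; rewrite big_nil. Qed.

Lemma D_ideal_genD x y :
  D_ideal_gen S x -> D_ideal_gen S y -> D_ideal_gen S (x + y).
Proof.
move=> [l1 [h1 ->]] [l2 [h2 ->]]; exists (l1 ++ l2); rewrite big_cat; split => //.
by move=> p; rewrite mem_cat => /orP[/h1|/h2].
Qed.

Lemma D_ideal_genMl d x : in_D d -> D_ideal_gen S x -> D_ideal_gen S (d * x).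
Proof.
move=> Dd [l [hl ->]]; exists [seq (d * p.1, p.2) | p <- l]; split.
  by move=> _ /mapP[p /hl[Dp Sp] ->]; split => //; apply: D_mul.
by rewrite big_map mulr_sumr; apply: eq_bigr => p _; rewrite mulrA.
Qed.

Lemma D_ideal_gen_base s : S s -> D_ideal_gen S s.
Proof.
move=> Ss; exists [:: (1, s)]; rewrite big_seq1 mul1r; split=> //.
by move=> _ /[1!inE]/eqP->; split=> //; exact: in_D1.
Qed.

Lemma D_ideal_gen_sum (I : eqType) (l : seq I) (F : I -> RX) :
  (forall i, i \in l -> D_ideal_gen S (F i)) -> D_ideal_gen S (\sum_(i <- l) F i).
Proof.
move=> h; rewrite big_seq.
by apply: big_ind; [exact: D_ideal_gen0 | exact: D_ideal_genD |].
Qed.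

End IdealGen.

Lemma D_ideal_gen_min (S T : RX -> Prop) :
  (forall s, S s -> D_ideal_gen T s) -> forall z, D_ideal_gen S z -> D_ideal_gen T z.
Proof.
move=> hST _ [l [hl ->]]; apply: D_ideal_gen_sum => p /hl[Dp Sp].
exact/D_ideal_genMl/hST.
Qed.

Lemma D_ideal_gen_mul (S U T : RX -> Prop) a b :
  (forall s u, S s -> U u -> D_ideal_gen T (s * u)) ->
  D_ideal_gen S a -> D_ideal_gen U b -> D_ideal_gen T (a * b).
Proof.
move=> hSU [l [hl ->]] [k [hk ->]].
rewrite mulr_suml; apply: D_ideal_gen_sum => p /hl[Dp Sp].
rewrite -mulrA; apply: D_ideal_genMl => //.
rewrite mulr_sumr; apply: D_ideal_gen_sum => q /hk[Dq Uq].
by rewrite mulrCA; apply: D_ideal_genMl => //; apply: hSU.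
Qed.

Theorem proposition2p2 (Lambda : Type) (r : Lambda -> RX)
    (hr : forall i, in_D (r i)) :
  let J := D_ideal_gen (fun x => exists i, x = r i) in
  forall z : RX,
    D_ideal_mul J J z <-> D_ideal_gen (fun x => exists i, x = r i ^+ 2) z.
Proof.
move=> J z; split; apply: D_ideal_gen_min.
- move=> _ [a [b [Ja [Jb ->]]]]; apply: D_ideal_gen_mul Ja Jb => _ _ [i ->] [j ->].
  have [c Dc ->] := mul_D_multiple_sqr_add (r i) (r j).
  rewrite mulrDr; apply/D_ideal_genD; apply/D_ideal_genMl/D_ideal_gen_base => //.
  + by exists i.
  + by exists j.
- move=> _ [i ->]; apply: D_ideal_gen_base; exists (r i), (r i).
  by rewrite expr2; split; last split; rewrite //; apply: D_ideal_gen_base; exists i.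
Qed.
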